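(* Let $1\le j\le s$ and $B>j$ be natural numbers and let $d=4s\sum_{1\le i\le j+1}B^i$. For all sufficiently large natural numbers $q$ there exists $\bar x\in\mathbb{N}^s$ such that for all $\bar a\in\{0,\dots,B-1\}^s$ and all $c\in\{0,\dots,B-1\}$: (a) if $\bar a\ne\bar 0$ then $\frac{q}{d}<\bar a^\top\bar x-c$; (b) $\bar a^\top\bar x-c<qd$; and (c) $\bar a^\top\bar x-c=q$ if and only if $\bar a=(1,\dots,1,0,\dots,0)$ (with exactly $j$ leading entries $1$) and $c=0$.
   Context: $\bar a^\top\bar x=\sum_{i=1}^s a_ix_i$. *)

From mathcomp Require Import all_boot all_order all_algebra.
Set Implicit Arguments. Unset Strict Implicit. Unset Printing Implicit Defensive.
Import Order.TTheory GRing.Theory Num.Theory.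

Definition dotn (s : nat) (a x : 'I_s -> nat) : nat := (\sum_(i < s) a i * x i)%N.

Definition lead_ones (s j : nat) : 'I_s -> nat := fun i => (i < j)%N : nat.

From mathcomp Require Import all_boot all_order all_algebra.
From mathcomp Require Import zify.
Import Order.TTheory GRing.Theory Num.Theory.

Set Implicit Arguments.
Unset Strict Implicit.
Unset Printing Implicit Defensive.

(* Let S = 1 + B + ... + B^(j-1) and w_i = B^(min i j), so that the target
   vector a = (1,...,1,0,...,0) has a.w = S.  Write q = t S + r with r < S and
   take x = t w + r e_0; then a.x = t (a.w) + a_0 r.  For digits a_i < B the
   equation a.w = S forces a = (1,...,1,0,...,0): the weights past position j
   all equal B^j > S, and below j base-B expansions are unique.  If a.w <> S,
   then t (a.w) misses t S by at least t, which dominates a_0 r + c once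
   t >= B (S + 1); this gives (c).  For (a) and (b), a <> 0 gives a.x >= t,
   and every x_i is at most q B^j. *)

Lemma digits_lt B n (f : 'I_n -> nat) :
  (forall i, f i < B) -> \sum_(i < n) f i * B ^ i < B ^ n.
Proof.
elim: n f => [|n IH] f f_lt; first by rewrite big_ord0.
rewrite big_ord_recr /= expnSr.
have low_lt := IH (fun i => f (widen_ord (leqnSn n) i)) (fun i => f_lt _).
apply: (@leq_trans ((f ord_max).+1 * B ^ n)); first by rewrite mulSn ltn_add2r.
by rewrite mulnC leq_mul2l f_lt orbT.
Qed.

Lemma digits_inj B n (f g : 'I_n -> nat) :
    (forall i, f i < B) -> (forall i, g i < B) ->
  \sum_(i < n) f i * B ^ i = \sum_(i < n) g i * B ^ i -> f =1 g.
Proof.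
elim: n f g => [|n IH] f g f_lt g_lt; first by move=> _ [].
have B_gt0 : 0 < B by apply: leq_ltn_trans (f_lt ord0).
rewrite !big_ord_recl /=.
under eq_bigr do rewrite expnS mulnCA.
under [in RHS]eq_bigr do rewrite expnS mulnCA.
rewrite -!big_distrr /= expn0 !muln1 !(mulnC B) => E.
have f0 : f ord0 = g ord0.
  have := congr1 (modn^~ B) E.
  by rewrite [f _ + _]addnC [g _ + _]addnC !modnMDl !modn_small.
move: E; rewrite f0 => /addnI /eqP; rewrite eqn_mul2r gtn_eqF //= => /eqP E.
have tail := IH _ _ (fun i => f_lt _) (fun i => g_lt _) E.
by move=> i; case: (unliftP ord0 i) => [k ->|->]; [exact: tail | exact: f0].
Qed.

Definition repunit (B j : nat) : nat := \sum_(i < j) B ^ i.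

Lemma repunit_gt0 B j : 0 < j -> 0 < repunit B j.
Proof. by case: j => // j _; rewrite /repunit big_ord_recl expn0. Qed.

Lemma repunit_lt B j : 1 < B -> repunit B j < B ^ j.
Proof.
move=> B_gt1; rewrite /repunit.
under eq_bigr do rewrite -[B ^ _]mul1n.
exact: digits_lt.
Qed.

Definition capped_pow (s B j : nat) : 'I_s -> nat := fun i => B ^ minn i j.

Lemma dotn_capped_pow_split B j k (a : 'I_(j + k) -> nat) :
  dotn a (capped_pow B j) =
  \sum_(i < j) a (lshift k i) * B ^ i + B ^ j * \sum_(i < k) a (rshift j i).
Proof.
rewrite /dotn big_split_ord big_distrr /=; congr (_ + _).
  by apply: eq_bigr => i _; rewrite /capped_pow /= (minn_idPl (ltnW (ltn_ord i))).
by apply: eq_bigr => i _; rewrite /capped_pow /= (minn_idPr (leq_addr _ _)) mulnC.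
Qed.

Lemma dotn_lead_ones_capped_pow B j s :
  j <= s -> dotn (@lead_ones s j) (capped_pow B j) = repunit B j.
Proof.
move=> j_le_s; have [k ->] : exists k, s = j + k by exists (s - j); rewrite subnKC.
rewrite dotn_capped_pow_split.
under eq_bigr do rewrite /lead_ones /= ltn_ord mul1n.
rewrite [X in B ^ j * X]big1 ?muln0 ?addn0 // => i _.
by rewrite /lead_ones /= ltnNge leq_addr.
Qed.

Lemma capped_pow_digits B j s (a : 'I_s -> nat) :
    1 < B -> j <= s -> (forall i, a i < B) ->
  dotn a (capped_pow B j) = repunit B j -> a =1 lead_ones j.
Proof.
move=> B_gt1 j_le_s; have [k Es] : exists k, s = j + k by exists (s - j); rewrite subnKC.
subst s; move=> a_lt; rewrite dotn_capped_pow_split => E.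
have tail0 : \sum_(i < k) a (rshift j i) = 0.
  have Bj_gt0 : 0 < B ^ j by rewrite expn_gt0 ltnW.
  apply/eqP; rewrite -leqn0 -ltnS -(ltn_pmul2l Bj_gt0) muln1.
  by apply: leq_ltn_trans (repunit_lt j B_gt1); rewrite -E leq_addl.
have low : \sum_(i < j) a (lshift k i) * B ^ i = \sum_(i < j) 1 * B ^ i.
  by under [RHS]eq_bigr do rewrite mul1n; rewrite -/(repunit B j) -E tail0 muln0 addn0.
move=> i; rewrite /lead_ones; case: (splitP i) => [i' | i'] Ei.
  have -> : i = lshift k i' by apply: val_inj.
  by apply: (digits_inj (fun _ => a_lt _) _ low) => _.
have -> : i = rshift j i' by apply: val_inj.
(* [splitP] has already turned [i < j] into [false], i.e. the goal is [a _ = 0]. *)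
by move/eqP: tail0; rewrite sum_nat_eq0 => /forallP /(_ i') /eqP.
Qed.
Lemma dotn_ge s (a x : 'I_s -> nat) m :
  (exists i, a i != 0) -> (forall i, m <= x i) -> m <= dotn a x.
Proof.
case=> i ai_neq0 x_ge; rewrite /dotn (bigD1 i) //=.
apply: leq_trans (leq_addr _ _); apply: leq_trans (x_ge i) _.
by rewrite leq_pmull // lt0n.
Qed.

Lemma dotn_le s (a x : 'I_s -> nat) α β :
  (forall i, a i <= α) -> (forall i, x i <= β) -> dotn a x <= s * (α * β).
Proof.
move=> a_le x_le; rewrite /dotn -[s in s * _]card_ord -sum_nat_const.
by apply: leq_sum => i _; apply: leq_mul.
Qed.

Lemma eq_dotnl s (a a' x : 'I_s -> nat) : a =1 a' -> dotn a x = dotn a' x.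
Proof. by move=> eq_a; apply: eq_bigr => i _; rewrite eq_a. Qed.

Definition separator (s B j t r : nat) : 'I_s -> nat :=
  fun i => t * capped_pow B j i + (i == 0 :> nat) * r.

Lemma dotn_separator s B j t r (a : 'I_s.+1 -> nat) :
  dotn a (separator B j t r) = t * dotn a (capped_pow B j) + a ord0 * r.
Proof.
rewrite /dotn /separator; under eq_bigr do rewrite mulnDr.
rewrite big_split big_distrr /=; congr (_ + _).
  by apply: eq_bigr => i _; rewrite mulnCA.
by rewrite big_ord_recl big1 ?addn0 ?mul1n // => i _; rewrite mul0n muln0.
Qed.

Section Separator.

Variables (B j s t r : nat).
Hypotheses (B_gt1 : 1 < B) (j_gt0 : 0 < j) (j_le_s : j <= s.+1).
Local Notation S := (repunit B j).
Hypotheses (r_lt : r < S) (t_ge : B * S.+1 <= t).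
Local Notation x := (@separator s.+1 B j t r).

Let S_gt0 : 0 < S := repunit_gt0 B j_gt0.

Lemma separator_lower (a : 'I_s.+1 -> nat) c d :
  (exists i, a i != 0) -> c < B -> 2 * S <= d -> t * S + r + d * c < d * dotn a x.
Proof.
move=> a_neq0 c_lt d_ge.
have t_le : t <= dotn a x.
  apply: dotn_ge a_neq0 _ => i; apply: leq_trans (leq_addr _ _).
  by rewrite leq_pmulr // expn_gt0 ltnW.
have twice_c_lt_t : 2 * c < t.
  have : B <= B * S := leq_pmulr B S_gt0.
  by move: t_ge; rewrite mulnS; lia.
have -> : d * dotn a x = d * c + d * (dotn a x - c).
  by rewrite -mulnDr subnKC //; apply: leq_trans t_le; lia.
rewrite addnC ltn_add2l.
apply: (@leq_trans (S * t.+1)); first by rewrite mulnS mulnC addnC ltn_add2r.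
apply: (@leq_trans (S * (2 * (t - c)))); first by rewrite leq_mul2l; apply/orP; right; lia.
by rewrite mulnA (mulnC S); apply: leq_mul => //; exact: leq_sub2r.
Qed.

Lemma separator_upper (a : 'I_s.+1 -> nat) :
  (forall i, a i < B) -> dotn a x <= s.+1 * B ^ j.+1 * (t * S + r).
Proof.
move=> a_lt; rewrite expnS -!mulnA; apply: dotn_le => [i | i]; first exact: ltnW.
rewrite mulnDr leq_add //.
  apply: (@leq_trans (t * B ^ j)); first by rewrite leq_mul2l leq_exp2l // geq_minr orbT.
  by rewrite mulnC leq_mul2l leq_pmulr ?S_gt0 ?orbT.
apply: (@leq_trans r); first by case: (_ == _); rewrite ?mul1n ?mul0n.
by rewrite leq_pmull // expn_gt0 ltnW.
Qed.

Lemma separator_eq (a : 'I_s.+1 -> nat) c :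
    (forall i, a i < B) -> c < B ->
  dotn a x = t * S + r + c <-> a =1 lead_ones j /\ c = 0.
Proof.
move=> a_lt c_lt; rewrite dotn_separator.
have S_le : S <= B * S by rewrite leq_pmull // ltnW.
have t_ge' : B + B * S <= t by rewrite -mulnS.
split=> [E | [a_ones ->]]; last first.
  rewrite (eq_dotnl _ a_ones) dotn_lead_ones_capped_pow // a_ones.
  by rewrite /lead_ones /= j_gt0 mul1n addn0.
have a0r_le : a ord0 * r <= B * S by rewrite leq_mul // ltnW.
case: (ltngtP (dotn a (capped_pow B j)) S) => [D_lt | D_gt | D_eq].
- have : t * (dotn a (capped_pow B j)).+1 <= t * S by rewrite leq_mul.
  by rewrite mulnS; lia.
- have : t * S.+1 <= t * dotn a (capped_pow B j) by rewrite leq_mul.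
  by rewrite mulnS; lia.
have a_ones := capped_pow_digits B_gt1 j_le_s a_lt D_eq.
split=> //; move: E; rewrite D_eq a_ones /lead_ones /= j_gt0 mul1n; lia.
Qed.

End Separator.

Local Open Scope ring_scope.

Lemma ltr_natB_div (R : numFieldType) (q d m c : nat) :
  (q + d * c < d * m)%N -> q%:R / d%:R < m%:R - c%:R :> R.
Proof.
move=> lt_qdm; have d_gt0 : (0 < d)%N by move: lt_qdm; case: d => //; rewrite !mul0n.
rewrite ltr_pdivrMr ?ltr0n // mulrBl ltrBrDr -!natrM -natrD ltr_nat.
by rewrite !(mulnC _ d).
Qed.

Lemma ltr_natB (R : numDomainType) (m c n : nat) :
  (m < n)%N -> m%:R - c%:R < n%:R :> R.
Proof. by move=> lt_mn; rewrite ltrBlDr -natrD ltr_nat ltn_addr. Qed.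

Lemma natrB_eq (R : numDomainType) (m c n : nat) :
  m%:R - c%:R = n%:R :> R <-> m = (n + c)%N.
Proof. by split=> [/eqP | ->]; rewrite ?natrD ?addrK // subr_eq -natrD eqr_nat => /eqP. Qed.

Theorem lemma6p8 (s j B : nat) (hj1 : (1 <= j)%N) (hjs : (j <= s)%N) (hB : (j < B)%N) :
  let d : nat := (4 * s * \sum_(1 <= i < j.+2) B ^ i)%N in
  exists Q : nat, forall q : nat, (Q <= q)%N ->
    exists x : 'I_s -> nat,
      forall (a : 'I_s -> 'I_B) (c : 'I_B),
        let v : rat := ((dotn (fun i => nat_of_ord (a i)) x)%:R - (nat_of_ord c)%:R) in
        ((exists i, nat_of_ord (a i) != 0%N) -> (q%:R / d%:R < v)) /\
        (v < q%:R * d%:R) /\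
        (v = q%:R <-> ((forall i, nat_of_ord (a i) = lead_ones j i) /\ nat_of_ord c = 0%N)).
Proof.
case: s hjs => [|s] hjs d; first by move: (leq_trans hj1 hjs).
have B_gt1 : (1 < B)%N by apply: leq_ltn_trans hB.
set S := repunit B j.
have S_gt0 : (0 < S)%N := repunit_gt0 B hj1.
have d_ge : (4 * s.+1 * B ^ j.+1 <= d)%N.
  by rewrite /d leq_mul2l big_nat_recr //= leq_addl.
have S_lt : (S < B ^ j.+1)%N.
  by apply: (leq_trans (repunit_lt j B_gt1)); rewrite leq_exp2l.
exists (B * S.+1 * S)%N => q q_ge.
have t_ge : (B * S.+1 <= q %/ S)%N by rewrite leq_divRL.
rewrite (divn_eq q S); move: (q %/ S)%N (q %% S)%N t_ge (ltn_pmod q S_gt0) => t r t_ge r_lt.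
exists (separator B j t r) => a c v; rewrite {}/v.
have a_lt i : (a i < B)%N := ltn_ord (a i).
split; [|split].
- move=> a_neq0; apply: ltr_natB_div; apply: separator_lower => //; lia.
- rewrite -natrM; apply: ltr_natB.
  apply: leq_ltn_trans (separator_upper t r B_gt1 hj1 a_lt) _.
  have t_gt0 : (0 < t)%N by apply: leq_trans t_ge; rewrite muln_gt0 (ltnW B_gt1).
  rewrite mulnC ltn_pmul2l ?addn_gt0 ?muln_gt0 ?t_gt0 ?S_gt0 //.
  by apply: leq_trans d_ge; rewrite -mulnA ltn_Pmull // muln_gt0 expn_gt0 (ltnW B_gt1).
- rewrite natrB_eq; exact: separator_eq.
Qed.
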